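(* Let $G$ be a finite group and let $H\le K$ be core-free subgroups of $G$ with $|G:K|\ge2$. Then \[ \frac{\mathbf{m}(G\circlearrowright G/H)}{|K:H|}\le\mathbf{m}(G\circlearrowright G/K)\le\mathbf{m}(G\circlearrowright G/H). \]
   Context: For a core-free subgroup $L$ of $G$, $G\circlearrowright G/L$ denotes the (faithful, transitive) permutation group induced by the action of $G$ on the set $G/L$ of right cosets of $L$ by right multiplication. For a transitive permutation group $X$ on a finite set $\Omega$ with $|\Omega|\ge2$, a subset $A\subseteq\Omega$ is self-separable for $X$ if there exists $x\in X$ with $A\cap A^x=\emptyset$; $\mathbf{m}(X)$ is the minimum cardinality of a subset of $\Omega$ that is not self-separable for $X$. *)

From mathcomp Require Import all_boot all_order all_algebra all_fingroup.
Set Implicit Arguments. Unset Strict Implicit. Unset Printing Implicit Defensive.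
Import GRing.Theory Num.Theory.

(* The points of Omega = G/L are the right cosets L :* x
   (x in G), i.e. [rcosets L G]; the element x acts by C |-> C :* x. *)

Local Open Scope group_scope.
Section SelfSep.
Variable gT : finGroupType.
Implicit Types (G L : {set gT}) (A : {set {set gT}}).

Definition coset_image A (x : gT) : {set {set gT}} := [set C :* x | C in A].

Definition self_separable G A : bool :=
  [exists x in G, [disjoint A & coset_image A x]].

(* The default value #|G/L| is attained by Omega itself
   (Omega^x = Omega, and Omega is nonempty), so it never alters the min. *)
Definition mperm G L : nat :=
  \big[minn/#|rcosets L G|]_(A in powerset (rcosets L G) | ~~ self_separable G A) #|A|.

End SelfSep.

(** The map [C |-> K * C] sends [H :* y] to [K :* y]; it is a surjection
    [G/H -> G/K] commuting with the right action of [G], whose fibres have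
    [#|K : H|] points.  A non-self-separable set of [G/H] therefore projects
    to a non-self-separable set of [G/K] that is no larger, and the full
    preimage of a non-self-separable set of [G/K] is non-self-separable and
    at most [#|K : H|] times larger. *)

From HB Require Import structures.
From mathcomp Require Import all_boot all_order all_algebra all_fingroup.
Set Implicit Arguments. Unset Strict Implicit. Unset Printing Implicit Defensive.
Import GRing.Theory Num.Theory.
Local Open Scope group_scope.

(* [minn] has no unit on [nat], but [bigD1] only needs a commutative
   semigroup law. *)
HB.instance Definition _ := SemiGroup.isComLaw.Build nat minn minnA minnC.

Section SelfSeparable.
Variable gT : finGroupType.
Implicit Types (G L : {set gT}) (A B Omega : {set {set gT}}).

Section Equivariant.
Variable f : {set gT} -> {set gT}.
Hypothesis fM : forall C x, f (C :* x) = f C :* x.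

Lemma self_separable_imset G A :
  self_separable G (f @: A) -> self_separable G A.
Proof.
case/existsP=> x /andP[xG dis]; apply/existsP; exists x; rewrite xG /=.
apply/pred0P => C /=; apply/andP => -[CA /imsetP[D DA defC]].
have fCx : f C \in coset_image (f @: A) x.
  by apply/imsetP; exists (f D); [apply: imset_f | rewrite defC fM].
by rewrite (disjointFr dis (imset_f f CA)) in fCx.
Qed.

Lemma self_separable_preimset (G : {group gT}) Omega B :
  (forall C x, C \in Omega -> x \in G -> C :* x \in Omega) ->
  B \subset f @: Omega ->
  self_separable G [set C in Omega | f C \in B] -> self_separable G B.
Proof.
move=> OmegaG sBf /existsP[x /andP[xG dis]].
apply/existsP; exists x; rewrite xG /=.
apply/pred0P => b /=; apply/andP => -[bB /imsetP[b' b'B defb]].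
have /imsetP[C COmega defbC] := subsetP sBf b bB.
have C'Omega : C :* x^-1 \in Omega by rewrite OmegaG ?groupV.
have C'B : f (C :* x^-1) \in B by rewrite fM -defbC defb rcosetK.
have CA : C \in [set C in Omega | f C \in B] by rewrite inE COmega -defbC bB.
have CAx : C \in coset_image [set C in Omega | f C \in B] x.
  by apply/imsetP; exists (C :* x^-1); [rewrite inE C'Omega | rewrite rcosetKV].
by rewrite (disjointFr dis CA) in CAx.
Qed.

End Equivariant.

Lemma rcosets_not_self_separable (G : {group gT}) L :
  ~~ self_separable G (rcosets L G).
Proof.
apply/existsP => -[x /andP[xG dis]].
have Lx : L :* x \in rcosets L G by apply/rcosetsP; exists x.
have Lxx : L :* x \in coset_image (rcosets L G) x.
  by apply/imsetP; exists (L :* 1); [apply/rcosetsP; exists 1 | rewrite rcoset1].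
by rewrite (disjointFr dis Lx) in Lxx.
Qed.

Lemma mperm_min G L A :
  A \subset rcosets L G -> ~~ self_separable G A -> mperm G L <= #|A|.
Proof.
by move=> sA nA; rewrite /mperm (bigD1 A) ?geq_minl //= powersetE sA.
Qed.

Lemma mpermP (G : {group gT}) L :
  exists A, [/\ A \subset rcosets L G, ~~ self_separable G A
              & #|A| = mperm G L].
Proof.
pose attained n := exists A, [/\ A \subset rcosets L G, ~~ self_separable G A
                                & #|A| = n].
rewrite /mperm; apply: (big_ind attained).
- by exists (rcosets L G); split; rewrite ?rcosets_not_self_separable.
- move=> m n [A [sA nA <-]] [B [sB nB <-]].
  by rewrite /minn; case: ifP => _; [exists A | exists B].
- by move=> A; rewrite powersetE => /andP[sA nA]; exists A.
Qed.

End SelfSeparable.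

Section CosetProjection.
Variables (gT : finGroupType) (G H K : {group gT}).
Hypothesis sHK : H \subset K.

Lemma mulG_rcoset y : K * (H :* y) = K :* y.
Proof. by rewrite mulgA mulGSid. Qed.

Lemma rcoset_in_rcosets C x :
  C \in rcosets H G -> x \in G -> C :* x \in rcosets H G.
Proof.
case/rcosetsP=> y yG -> xG; apply/rcosetsP.
by exists (y * x); rewrite ?groupM ?rcosetM.
Qed.

Lemma imset_mulG_rcosets : (fun C => K * C) @: rcosets H G = rcosets K G.
Proof.
apply/setP => D; apply/imsetP/rcosetsP => [[C /rcosetsP[y yG ->] ->]|[y yG ->]].
  by exists y; rewrite ?mulG_rcoset.
by exists (H :* y); [apply/rcosetsP; exists y | rewrite mulG_rcoset].
Qed.

Lemma card_rcosets_preimset (B : {set {set gT}}) :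
  #|[set C in rcosets H G | K * C \in B]| <= #|K : H| * #|B|.
Proof.
set A := [set C in _ | _].
have sA : A \subset [set p.1 :* repr p.2 | p in setX (rcosets H K) B].
  apply/subsetP => C; rewrite inE => /andP[/rcosetsP[z zG ->]].
  rewrite mulG_rcoset => zB; set r := repr (K :* z).
  have := mem_repr_rcoset K z; rewrite -/r mem_rcoset => rzK.
  have zrK : z * r^-1 \in K by rewrite -[z]invgK -invMg groupV.
  apply/imsetP; exists (H :* (z * r^-1), K :* z).
    by rewrite inE zB andbT; apply/rcosetsP; exists (z * r^-1).
  by rewrite /= -rcosetM mulgKV.
apply: leq_trans (subset_leq_card sA) _.
by rewrite (leq_trans (leq_imset_card _ _)) ?cardsX.
Qed.

End CosetProjection.

Theorem lemma3p3 (gT : finGroupType) (G H K : {group gT}) :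
  H \subset K -> K \subset G ->
  gcore H G = 1 -> gcore K G = 1 ->
  1 < #|G : K| ->
  (((mperm G H)%:R / (#|K : H|)%:R : rat) <= (mperm G K)%:R)%R /\
  (mperm G K <= mperm G H)%N.
Proof.
move=> sHK _ _ _ _; have mulKA C x := mulgA K C [set x].
split.
- have [B [sB nB <-]] := mpermP G K.
  have le_mH : mperm G H <= #|K : H| * #|B|.
    apply: leq_trans (card_rcosets_preimset G sHK B).
    apply: mperm_min; first by apply/subsetP => C; rewrite inE => /andP[].
    apply: contra nB; apply: (self_separable_preimset mulKA).
      exact: rcoset_in_rcosets.
    by rewrite imset_mulG_rcosets.
  by rewrite ler_pdivrMr ?ltr0n ?indexg_gt0 // -natrM ler_nat mulnC.
- have [A [sA nA <-]] := mpermP G H.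
  apply: leq_trans (leq_imset_card (fun C => K * C) A).
  apply: mperm_min; first by rewrite -(imset_mulG_rcosets G sHK) imsetS.
  by apply: contra nA; apply: self_separable_imset.
Qed.
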